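(* The map $\alpha_M\colon M\otimes U_0\to U_0$, $(i,j)\otimes(r,s)\mapsto\big(\frac13(i+r),\frac13(j+s)\big)$, is an injective morphism of $\mathsf{SquaMS}$. Thus $(U_0,\alpha_M)$ is an injective $M\otimes-$ algebra.
   Context: Let $M_0=\{(r,s)\in[0,1]^2: r\in\{0,1\}\text{ or } s\in\{0,1\}\}$. A square metric space is a pair $(X,S_X)$ with $X$ a metric space with all distances at most $2$ and $S_X\colon M_0\to X$ injective such that (sq1) for $i\in\{0,1\}$, $r,s\in[0,1]$: $d_X(S_X(i,r),S_X(i,s))=|s-r|$ and $d_X(S_X(r,i),S_X(s,i))=|s-r|$; (sq2) $d_X(S_X(r,s),S_X(t,u))\ge|r-t|+|s-u|$. $\mathsf{SquaMS}$: these objects, with short maps $f$ satisfying $f\circ S_X=S_Y$ as morphisms. Let $N=\{0,1,2\}^2$, $M=N\setminus\{(1,1)\}$, also viewed as points of $\mathbb{R}^2$. For $X$ in $\mathsf{SquaMS}$, $M\otimes X=(M\times X)/\!\sim$, where $\sim$ is generated by $(m,S_X(p))\sim(n,S_X(q))$ whenever $m,n\in M$ differ by exactly $1$ in exactly one coordinate and $(m+p)/3=(n+q)/3$; $m\otimes x$ is the class of $(m,x)$. With $d((a,u),(b,v))=\frac13 d_X(u,v)$ if $a=b$ and $2$ otherwise, $M\otimes X$ has the quotient metric (infimum over finite chains of sums of consecutive distances, $\sim$-related consecutive pairs counting $0$). $S_{M\otimes X}(p)=m\otimes S_X(3p-m)$ for any $m\in M$ with $p\in(m+[0,1]^2)/3$.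 $U_0=[0,1]^2$ with the taxicab metric $|x-x'|+|y-y'|$ and $S_{U_0}$ the inclusion of $M_0$. *)

From Stdlib Require Import Reals Relations.
From Coquelicot Require Import Rbar Lub.
Open Scope R_scope.

Definition inU0 (p : R * R) : Prop :=
  0 <= fst p <= 1 /\ 0 <= snd p <= 1.

Definition inM0 (p : R * R) : Prop :=
  inU0 p /\ (fst p = 0 \/ fst p = 1 \/ snd p = 0 \/ snd p = 1).

Definition taxi (p q : R * R) : R :=
  Rabs (fst p - fst q) + Rabs (snd p - snd q).

Definition inM (m : nat * nat) : Prop :=
  (fst m <= 2)%nat /\ (snd m <= 2)%nat /\ m <> (1%nat, 1%nat).

Definition adjM (m n : nat * nat) : Prop :=
  (fst m = fst n /\ (snd m = S (snd n) \/ snd n = S (snd m))) \/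
  (snd m = snd n /\ (fst m = S (fst n) \/ fst n = S (fst m))).

Section Tensor.
Variable X : Type.
Variable memX : X -> Prop.
Variable dX : X -> X -> R.
Variable SX : R * R -> X.           (* S_X, only relevant on M_0 *)

Definition tpt : Type := ((nat * nat) * X)%type.

Definition tvalid (a : tpt) : Prop := inM (fst a) /\ memX (snd a).

Definition tgen (a b : tpt) : Prop :=
  exists p q : R * R,
    inM0 p /\ inM0 q /\ inM (fst a) /\ inM (fst b) /\ adjM (fst a) (fst b) /\
    snd a = SX p /\ snd b = SX q /\
    (INR (fst (fst a)) + fst p) / 3 = (INR (fst (fst b)) + fst q) / 3 /\
    (INR (snd (fst a)) + snd p) / 3 = (INR (snd (fst b)) + snd q) / 3.

Definition tequiv : tpt -> tpt -> Prop := clos_refl_sym_trans tpt tgen.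

Definition tbase (a b : tpt) : R :=
  if (Nat.eqb (fst (fst a)) (fst (fst b)) && Nat.eqb (snd (fst a)) (snd (fst b)))%bool
  then dX (snd a) (snd b) / 3 else 2.

Definition tstep (a b : tpt) (c : R) : Prop :=
  (tequiv a b /\ c = 0) \/ (~ tequiv a b /\ c = tbase a b).

Inductive chain_cost : tpt -> tpt -> R -> Prop :=
| cc_nil a : tvalid a -> chain_cost a a 0
| cc_cons a b c x r :
    tvalid a -> tstep a b x -> chain_cost b c r -> chain_cost a c (x + r).

(* the quotient metric (on representatives): infimum over chains *)
Definition qdist (a b : tpt) : Rbar := Glb_Rbar (fun r => chain_cost a b r).

End Tensor.

Definition U0tpt := tpt (R * R).
Definition U0valid : U0tpt -> Prop := tvalid (R * R) inU0.
Definition U0equiv : U0tpt -> U0tpt -> Prop := tequiv (R * R) (fun p => p).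
Definition U0qdist : U0tpt -> U0tpt -> Rbar :=
  qdist (R * R) inU0 taxi (fun p => p).

Definition alphaM (a : U0tpt) : R * R :=
  ((INR (fst (fst a)) + fst (snd a)) / 3, (INR (snd (fst a)) + snd (snd a)) / 3).

(* On the cell m the map alpha_M is the affine contraction u |-> (m + u)/3, so
   within a cell it divides taxicab distances by 3, while any two points of U_0
   are at distance at most 2, the cost of a step between distinct cells; by the
   triangle inequality alpha_M is short along every chain, hence for the
   quotient metric.  Conversely, i + u = k + v with i, k naturals and u, v in [0,1] forces
   either i = k and u = v, or |i - k| = 1 with u, v on opposite edges, which is
   exactly a generating step of ~.  Two points with the same image in diagonally
   adjacent cells are joined through one of the two cells sharing an edge with
   both; these cannot both be the missing cell (1,1). *)
From Stdlib Require Import Reals Relations.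
From Coquelicot Require Import Rbar Lub.
From Stdlib Require Import Lra Lia.
Open Scope R_scope.

Lemma alphaM_in_U0 (a : U0tpt) : U0valid a -> inU0 (alphaM a).
Proof.
  destruct a as [[i j] [u1 u2]]; intros [[Hi [Hj _]] [Hu1 Hu2]]; simpl in *.
  apply le_INR in Hi; apply le_INR in Hj; simpl in Hi, Hj.
  pose proof (pos_INR i); pose proof (pos_INR j).
  unfold inU0, alphaM; simpl; lra.
Qed.

Lemma alphaM_compat (a b : U0tpt) : U0equiv a b -> alphaM a = alphaM b.
Proof.
  induction 1 as [x y Hgen | | |]; try congruence.
  destruct Hgen as (p & q & _ & _ & _ & _ & _ & Ex & Ey & E1 & E2).
  destruct x as [[i j] u], y as [[k l] v]; simpl in *; subst u v.
  unfold alphaM; simpl; rewrite E1, E2; reflexivity.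
Qed.

Lemma taxi_diag (p : R * R) : taxi p p = 0.
Proof. unfold taxi; rewrite !Rminus_diag, Rabs_R0; ring. Qed.

Lemma taxi_triangle (p q s : R * R) : taxi p s <= taxi p q + taxi q s.
Proof.
  unfold taxi.
  replace (fst p - fst s) with ((fst p - fst q) + (fst q - fst s)) by ring.
  replace (snd p - snd s) with ((snd p - snd q) + (snd q - snd s)) by ring.
  pose proof (Rabs_triang (fst p - fst q) (fst q - fst s)).
  pose proof (Rabs_triang (snd p - snd q) (snd q - snd s)).
  lra.
Qed.

Lemma taxi_le_2 (p q : R * R) : inU0 p -> inU0 q -> taxi p q <= 2.
Proof.
  destruct p as [p1 p2], q as [q1 q2]; unfold inU0, taxi; simpl; intros.
  unfold Rabs; destruct (Rcase_abs (p1 - q1)), (Rcase_abs (p2 - q2)); lra.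
Qed.

Lemma taxi_alphaM_same_cell (m : nat * nat) (u v : R * R) :
  taxi (alphaM (m, u)) (alphaM (m, v)) = taxi u v / 3.
Proof.
  unfold taxi, alphaM; simpl.
  replace ((INR (fst m) + fst u) / 3 - (INR (fst m) + fst v) / 3)
    with ((fst u - fst v) * / 3) by field.
  replace ((INR (snd m) + snd u) / 3 - (INR (snd m) + snd v) / 3)
    with ((snd u - snd v) * / 3) by field.
  rewrite !Rabs_mult, (Rabs_right (/ 3)) by lra.
  field.
Qed.

Lemma alphaM_step_le (a b : U0tpt) (c : R) :
  U0valid a -> U0valid b -> tstep (R * R) taxi (fun p => p) a b c ->
  taxi (alphaM a) (alphaM b) <= c.
Proof.
  intros Va Vb [[Hab ->] | [_ ->]].
  - rewrite (alphaM_compat a b Hab), taxi_diag; lra.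
  - destruct a as [[i j] u], b as [[k l] v]; unfold tbase; simpl.
    destruct (Nat.eqb_spec i k), (Nat.eqb_spec j l); simpl;
      try (apply taxi_le_2; apply alphaM_in_U0; assumption).
    subst; rewrite taxi_alphaM_same_cell; lra.
Qed.

Lemma chain_cost_valid (a b : U0tpt) (r : R) :
  chain_cost (R * R) inU0 taxi (fun p => p) a b r -> U0valid a.
Proof. destruct 1; assumption. Qed.

Lemma alphaM_chain_le (a b : U0tpt) (r : R) :
  chain_cost (R * R) inU0 taxi (fun p => p) a b r -> taxi (alphaM a) (alphaM b) <= r.
Proof.
  induction 1 as [a _ | a b c x r Va Hstep Hchain IH].
  - rewrite taxi_diag; lra.
  - pose proof (alphaM_step_le a b x Va (chain_cost_valid _ _ _ Hchain) Hstep).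
    pose proof (taxi_triangle (alphaM a) (alphaM b) (alphaM c)).
    lra.
Qed.

Lemma alphaM_short (a b : U0tpt) :
  Rbar_le (Finite (taxi (alphaM a) (alphaM b))) (U0qdist a b).
Proof.
  apply (Glb_Rbar_correct (fun r => chain_cost (R * R) inU0 taxi (fun p => p) a b r)).
  intros r Hr; exact (alphaM_chain_le a b r Hr).
Qed.

Lemma INR_plus_unit_cases (i k : nat) (u v : R) :
  0 <= u <= 1 -> 0 <= v <= 1 -> INR i + u = INR k + v ->
  (i = k /\ u = v) \/ (i = S k /\ u = 0 /\ v = 1) \/ (k = S i /\ u = 1 /\ v = 0).
Proof.
  intros Hu Hv E.
  assert (C : i = k \/ i = S k \/ k = S i \/ (S (S k) <= i)%nat \/ (S (S i) <= k)%nat)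
    by lia.
  destruct C as [-> | [-> | [-> | C]]]; rewrite ?S_INR in E.
  - left; split; [reflexivity | lra].
  - right; left; repeat split; lra.
  - right; right; repeat split; lra.
  - exfalso; destruct C as [C | C]; apply le_INR in C; rewrite !S_INR in C; lra.
Qed.

Lemma U0equiv_adjacent (m n : nat * nat) (u v : R * R) :
  inM m -> inM n -> adjM m n -> inM0 u -> inM0 v ->
  INR (fst m) + fst u = INR (fst n) + fst v ->
  INR (snd m) + snd u = INR (snd n) + snd v ->
  U0equiv (m, u) (n, v).
Proof.
  intros Hm Hn Hadj Hu Hv E1 E2.
  apply rst_step; exists u, v; simpl.
  rewrite E1, E2; intuition.
Qed.

Lemma U0equiv_shift_fst (i k j : nat) (u1 v1 s : R) :
  inM (i, j) -> inM (k, j) -> 0 <= u1 <= 1 -> 0 <= v1 <= 1 -> 0 <= s <= 1 ->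
  INR i + u1 = INR k + v1 -> U0equiv ((i, j), (u1, s)) ((k, j), (v1, s)).
Proof.
  intros Hij Hkj Hu Hv Hs E.
  destruct (INR_plus_unit_cases i k u1 v1 Hu Hv E)
    as [[-> ->] | [[-> [-> ->]] | [-> [-> ->]]]];
    [apply rst_refl | |];
    apply U0equiv_adjacent; unfold adjM, inM0, inU0; simpl;
    solve [assumption | lia | lra].
Qed.

Lemma U0equiv_shift_snd (i j l : nat) (r u2 v2 : R) :
  inM (i, j) -> inM (i, l) -> 0 <= r <= 1 -> 0 <= u2 <= 1 -> 0 <= v2 <= 1 ->
  INR j + u2 = INR l + v2 -> U0equiv ((i, j), (r, u2)) ((i, l), (r, v2)).
Proof.
  intros Hij Hil Hr Hu Hv E.
  destruct (INR_plus_unit_cases j l u2 v2 Hu Hv E)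
    as [[-> ->] | [[-> [-> ->]] | [-> [-> ->]]]];
    [apply rst_refl | |];
    apply U0equiv_adjacent; unfold adjM, inM0, inU0; simpl;
    solve [assumption | lia | lra].
Qed.

Lemma inM_corner (i j k l : nat) : inM (i, j) -> inM (k, l) -> inM (k, j) \/ inM (i, l).
Proof.
  unfold inM; simpl; intros (Hi & Hj & Hij) (Hk & Hl & Hkl).
  destruct (Nat.eq_dec k 1), (Nat.eq_dec j 1); subst;
    [right | left ..]; repeat split; try assumption; congruence.
Qed.

Lemma alphaM_injective (a b : U0tpt) :
  U0valid a -> U0valid b -> alphaM a = alphaM b -> U0equiv a b.
Proof.
  destruct a as [[i j] [u1 u2]], b as [[k l] [v1 v2]].
  intros [Ma [Hu1 Hu2]] [Mb [Hv1 Hv2]] E; simpl in *.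
  unfold alphaM in E; simpl in E; injection E as E1 E2.
  assert (F1 : INR i + u1 = INR k + v1) by lra.
  assert (F2 : INR j + u2 = INR l + v2) by lra.
  destruct (inM_corner i j k l Ma Mb) as [Mkj | Mil].
  - apply rst_trans with ((k, j), (v1, u2)).
    + apply U0equiv_shift_fst; assumption.
    + apply U0equiv_shift_snd; assumption.
  - apply rst_trans with ((i, l), (u1, v2)).
    + apply U0equiv_shift_snd; assumption.
    + apply U0equiv_shift_fst; assumption.
Qed.

Theorem mainTheorem14 :
  (* alpha_M maps M (x) U_0 into U_0 *)
  (forall a : U0tpt, U0valid a -> inU0 (alphaM a)) /\
  (* alpha_M is well defined on ~-classes *)
  (forall a b : U0tpt, U0valid a -> U0valid b -> U0equiv a b -> alphaM a = alphaM b) /\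
  (* alpha_M is short for the quotient metric *)
  (forall a b : U0tpt, U0valid a -> U0valid b ->
     Rbar_le (Finite (taxi (alphaM a) (alphaM b))) (U0qdist a b)) /\
  (* alpha_M o S_{M (x) U_0} = S_{U_0}, for every admissible choice of m *)
  (forall (p : R * R) (m : nat * nat), inM0 p -> inM m ->
     inU0 (3 * fst p - INR (fst m), 3 * snd p - INR (snd m)) ->
     alphaM (m, (3 * fst p - INR (fst m), 3 * snd p - INR (snd m))) = p) /\
  (* alpha_M is injective on M (x) U_0 = (M x U_0)/~ *)
  (forall a b : U0tpt, U0valid a -> U0valid b -> alphaM a = alphaM b -> U0equiv a b).
Proof.
  split; [exact alphaM_in_U0 |].
  split; [intros a b _ _; exact (alphaM_compat a b) |].
  split; [intros a b _ _; exact (alphaM_short a b) |].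
  split; [| exact alphaM_injective].
  intros [p1 p2] m _ _ _; unfold alphaM; simpl; f_equal; field.
Qed.
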